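(* Let $k=\mathbb F_2$, $R\in\operatorname{Ob}(\hat{\mathcal C})$, $G=\mathrm{SL}_3(R)$, $\bar\rho:G\to\mathrm{GL}_3(\mathbb F_2)$ induced by reduction and $\iota:G\hookrightarrow\mathrm{GL}_3(R)$ the inclusion. (i) There exists a lift $\rho_0$ of $\bar\rho$ to $\mathbb Z_2$. (ii) There is no $R\in\operatorname{Ob}(\hat{\mathcal C})$ for which $\iota$ is a universal lift of $\bar\rho$.
   Context: Let $k$ be a finite field. $\hat{\mathcal C}$ is the category of complete noetherian local commutative rings with residue field $k$, with local homomorphisms inducing the identity on $k$; $\mathfrak m_S$ is the maximal ideal of $S$. For a profinite group $G$ and continuous $\bar\rho:G\to\mathrm{GL}_n(k)$, a lift to $S\in\hat{\mathcal C}$ is a continuous $\rho:G\to\mathrm{GL}_n(S)$ whose reduction is $\bar\rho$; lifts are strictly equivalent if conjugate by an element of $I+M_n(\mathfrak m_S)$; $\mathrm{Def}_{\bar\rho}(S)$ is the set of strict equivalence classes. A lift $\rho$ to $R$ is universal if $f\mapsto[\mathrm{GL}_n(f)\circ\rho]$ ($\mathrm{GL}_n(f)$ applying $f$ entrywise) is a natural isomorphism $\mathrm{Hom}_{\hat{\mathcal C}}(R,-)\to\mathrm{Def}_{\bar\rho}$. $\mathrm{SL}_n(R)$ carries its profinite topology. *)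

From Stdlib Require Import Classical ClassicalEpsilon FunctionalExtensionality ProofIrrelevance.
From HB Require Import structures.
From mathcomp Require Import all_boot all_order all_algebra.
Set Implicit Arguments. Unset Strict Implicit. Unset Printing Implicit Defensive.
Import GRing.Theory Num.Theory.
Local Open Scope ring_scope.

(* The ring Z_2 of 2-adic integers, as the inverse limit of Z/2^n Z:   *)
(* coherent sequences x_n in [0, 2^n) with x_n = x_{n+1} mod 2^n.      *)

Definition pw (n : nat) : int := (2 ^ n)%N%:Z.

Record Z2 := MkZ2 {
  z2seq : nat -> int ;
  z2coh : forall n, z2seq n = modz (z2seq n.+1) (pw n) }.

Lemma modz_mulr (a d e : int) : modz (modz a (d * e)) d = modz a d.
Proof. by rewrite {2}(divz_eq a (d * e)) [d * e]mulrC mulrA modzMDl. Qed.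

Lemma pwS n : pw n.+1 = pw n * 2.
Proof. by rewrite /pw expnSr PoszM. Qed.

Lemma modpwS (a : int) n : modz (modz a (pw n.+1)) (pw n) = modz a (pw n).
Proof. by rewrite pwS modz_mulr. Qed.

Lemma z2mod (x : Z2) n : modz (z2seq x n) (pw n) = z2seq x n.
Proof. by rewrite {2}(z2coh x n) (z2coh x n) modz_mod. Qed.

Lemma z2_ext (x y : Z2) : (forall n, z2seq x n = z2seq y n) -> x = y.
Proof.
case: x => fx hx; case: y => fy hy /= H.
have E : fx = fy by apply: functional_extensionality.
subst fy; by rewrite (proof_irrelevance _ hx hy).
Qed.

Lemma z2zero_coh n : (fun _ : nat => 0 : int) n = modz 0 (pw n).
Proof. by rewrite mod0z. Qed.
Definition z2zero : Z2 := MkZ2 z2zero_coh.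

Lemma z2one_coh n : modz 1 (pw n) = modz (modz 1 (pw n.+1)) (pw n).
Proof. by rewrite modpwS. Qed.
Definition z2one : Z2 := MkZ2 z2one_coh.

Lemma z2opp_coh (x : Z2) n :
  modz (- z2seq x n) (pw n) = modz (modz (- z2seq x n.+1) (pw n.+1)) (pw n).
Proof. by rewrite modpwS (z2coh x n) modzNm. Qed.
Definition z2opp (x : Z2) : Z2 := MkZ2 (z2opp_coh x).

Lemma z2add_coh (x y : Z2) n :
  modz (z2seq x n + z2seq y n) (pw n)
  = modz (modz (z2seq x n.+1 + z2seq y n.+1) (pw n.+1)) (pw n).
Proof. by rewrite modpwS (z2coh x n) (z2coh y n) modzDm. Qed.
Definition z2add (x y : Z2) : Z2 := MkZ2 (z2add_coh x y).

Lemma z2mul_coh (x y : Z2) n :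
  modz (z2seq x n * z2seq y n) (pw n)
  = modz (modz (z2seq x n.+1 * z2seq y n.+1) (pw n.+1)) (pw n).
Proof. by rewrite modpwS (z2coh x n) (z2coh y n) modzMm. Qed.
Definition z2mul (x y : Z2) : Z2 := MkZ2 (z2mul_coh x y).

(* classical decidable equality and choice (Z_2 has no computable ones) *)
Definition z2eqb (x y : Z2) : bool :=
  if excluded_middle_informative (x = y) then true else false.
Lemma z2eqP : Equality.axiom z2eqb.
Proof.
move=> x y; rewrite /z2eqb; case: excluded_middle_informative => H.
  exact: ReflectT. exact: ReflectF.
Qed.
HB.instance Definition _ := hasDecEq.Build Z2 z2eqP.

Definition cfind (T : Type) (P : pred T) (n : nat) : option T :=
  match excluded_middle_informative (exists x, P x) with
  | left H => Some (proj1_sig (constructive_indefinite_description _ H))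
  | right _ => None
  end.
Lemma cfind_correct (T : Type) (P : pred T) n x : cfind P n = Some x -> P x.
Proof.
rewrite /cfind; case: excluded_middle_informative => // H [<-].
exact: (proj2_sig (constructive_indefinite_description _ H)).
Qed.
Lemma cfind_complete (T : Type) (P : pred T) : (exists x, P x) -> exists n, cfind P n.
Proof. move=> H; exists 0%N; rewrite /cfind; case: excluded_middle_informative => // K; by case: (K H). Qed.
Lemma cfind_ext (T : Type) (P Q : pred T) : P =1 Q -> cfind P =1 cfind Q.
Proof. move=> H; have E : P = Q by apply: functional_extensionality. by rewrite E. Qed.
HB.instance Definition _ :=
  hasChoice.Build Z2 (@cfind_correct Z2) (@cfind_complete Z2) (@cfind_ext Z2).

Lemma z2addA : associative z2add.
Proof. by move=> x y z; apply: z2_ext => n /=; rewrite modzDml modzDmr addrA. Qed.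
Lemma z2addC : commutative z2add.
Proof. by move=> x y; apply: z2_ext => n /=; rewrite addrC. Qed.
Lemma z2add0 : left_id z2zero z2add.
Proof. by move=> x; apply: z2_ext => n /=; rewrite add0r z2mod. Qed.
Lemma z2addN : left_inverse z2zero z2opp z2add.
Proof. by move=> x; apply: z2_ext => n /=; rewrite modzDml addNr mod0z. Qed.
HB.instance Definition _ := GRing.isZmodule.Build Z2 z2addA z2addC z2add0 z2addN.

Lemma z2mulA : associative z2mul.
Proof. by move=> x y z; apply: z2_ext => n /=; rewrite modzMml modzMmr mulrA. Qed.
Lemma z2mulC : commutative z2mul.
Proof. by move=> x y; apply: z2_ext => n /=; rewrite mulrC. Qed.
Lemma z2mul1 : left_id z2one z2mul.
Proof. by move=> x; apply: z2_ext => n /=; rewrite modzMml mul1r z2mod. Qed.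
Lemma z2mulDl : left_distributive z2mul z2add.
Proof. by move=> x y z; apply: z2_ext => n /=; rewrite modzMml modzDm mulrDl. Qed.
Lemma z2one_neq0 : z2one != z2zero.
Proof. by apply/eqP => H; have := congr1 (fun x => z2seq x 1) H. Qed.
HB.instance Definition _ :=
  GRing.Zmodule_isComNzRing.Build Z2 z2mulA z2mulC z2mul1 z2mulDl z2one_neq0.

Definition z2res (x : Z2) : 'F_2 := (z2seq x 1)%:~R.

(* The category C^ for k = F_2.  An object is a commutative ring R     *)
(* together with its residue map pi : R -> F_2 (so k = F_2 = R/m_R).   *)

Definition is_ring_hom (R S : nzRingType) (f : R -> S) : Prop :=
  [/\ f 1 = 1, forall x y, f (x + y) = f x + f y & forall x y, f (x * y) = f x * f y].

Definition mker (R : nzRingType) (pi : R -> 'F_2) : R -> Prop := fun x => pi x = 0.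

(* powers of an ideal: I^0 = R, I^(i+1) = sums of products a*b, a in I, b in I^i *)
Inductive mpow (R : nzRingType) (I : R -> Prop) : nat -> R -> Prop :=
| mpow0 x : mpow I 0 x
| mpowZ i : mpow I i.+1 0
| mpowS i a b y : I a -> mpow I i b -> mpow I i.+1 y -> mpow I i.+1 (a * b + y).

Definition is_ideal (R : nzRingType) (I : R -> Prop) : Prop :=
  [/\ I 0, forall x y, I x -> I y -> I (x + y) & forall r x, I x -> I (r * x)].

Definition fin_gen (R : nzRingType) (I : R -> Prop) : Prop :=
  exists s : seq R, (forall i, (i < size s)%N -> I s`_i) /\
    forall x, I x -> exists c : 'I_(size s) -> R, x = \sum_(i < size s) c i * s`_i.

Definition noetherian (R : nzRingType) : Prop :=
  forall I : R -> Prop, is_ideal I -> fin_gen I.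

(* local with maximal ideal ker pi and residue field F_2 via pi *)
Definition local_res (R : nzRingType) (pi : R -> 'F_2) : Prop :=
  is_ring_hom pi /\ forall x, pi x != 0 -> exists y, x * y = 1 /\ y * x = 1.

(* m-adically separated and complete *)
Definition m_complete (R : nzRingType) (pi : R -> 'F_2) : Prop :=
  (forall x, (forall i, mpow (mker pi) i x) -> x = 0) /\
  (forall x : nat -> R, (forall i, mpow (mker pi) i (x i.+1 - x i)) ->
     exists l, forall i, mpow (mker pi) i (l - x i)).

Definition in_Chat (R : comNzRingType) (pi : R -> 'F_2) : Prop :=
  [/\ local_res pi, noetherian R & m_complete pi].

(* morphisms of C^: ring homs inducing the identity on k (hence local) *)
Definition Chat_hom (R S : comNzRingType) (piR : R -> 'F_2) (piS : S -> 'F_2)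
  (f : R -> S) : Prop :=
  is_ring_hom f /\ forall x, piS (f x) = piR x.

(* The profinite group is G = SL_m(R) (as the predicate det g = 1 on   *)
(* 'M[R]_m), with its profinite topology given by the congruence       *)
(* subgroups ker(SL_m(R) -> SL_m(R/m_R^i)).                            *)

Definition mx_cong (R : nzRingType) (pi : R -> 'F_2) (i : nat) m n
  (A B : 'M[R]_(m, n)) : Prop :=
  forall r c, mpow (mker pi) i (A r c - B r c).

Definition mx_invertible (S : nzRingType) n (A : 'M[S]_n) : Prop :=
  exists B : 'M[S]_n, A *m B = 1%:M /\ B *m A = 1%:M.

Definition is_lift (R S : comNzRingType) (piR : R -> 'F_2) (piS : S -> 'F_2) m n
  (rhobar : 'M[R]_m -> 'M['F_2]_n) (rho : 'M[R]_m -> 'M[S]_n) : Prop :=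
  [/\ forall g h, \det g = 1 -> \det h = 1 -> rho (g *m h) = rho g *m rho h,
      forall g, \det g = 1 -> mx_invertible (rho g),
      forall g, \det g = 1 -> map_mx piS (rho g) = rhobar g &
      (* continuity (for the m_R-adic topology on SL_m(R) and m_S-adic on GL_n(S)) *)
      forall j, exists i, forall g, \det g = 1 ->
        mx_cong piR i g 1%:M -> mx_cong piS j (rho g) 1%:M].

(* strict equivalence: conjugation by an element of I + M_n(m_S) *)
Definition strictly_equiv (R S : comNzRingType) (piS : S -> 'F_2) m n
  (rho1 rho2 : 'M[R]_m -> 'M[S]_n) : Prop :=
  exists P Q : 'M[S]_n,
    [/\ P *m Q = 1%:M, Q *m P = 1%:M, map_mx piS P = 1%:M &
        forall g, \det g = 1 -> rho2 g = P *m rho1 g *m Q].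

(* rho (a lift to Rd) is universal: for every object S of C^, the map
   Hom_C^(Rd, S) -> Def(S), f |-> [GL_n(f) o rho], is a bijection *)
Definition universal_lift (R Rd : comNzRingType) (piR : R -> 'F_2) (piRd : Rd -> 'F_2)
  m n (rhobar : 'M[R]_m -> 'M['F_2]_n) (rho : 'M[R]_m -> 'M[Rd]_n) : Prop :=
  [/\ in_Chat piRd, is_lift piR piRd rhobar rho &
      forall (S : comNzRingType) (piS : S -> 'F_2), in_Chat piS ->
      forall rho' : 'M[R]_m -> 'M[S]_n, is_lift piR piS rhobar rho' ->
      exists f : Rd -> S,
        [/\ Chat_hom piRd piS f,
            strictly_equiv piS (fun g => map_mx f (rho g)) rho' &
            forall f' : Rd -> S, Chat_hom piRd piS f' ->
              strictly_equiv piS (fun g => map_mx f' (rho g)) rho' -> f' =1 f]].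

From HB Require Import structures.
From mathcomp Require Import all_boot all_order all_algebra.
From mathcomp Require Import ring zify.
From Stdlib Require Import ClassicalEpsilon.
Set Implicit Arguments. Unset Strict Implicit. Unset Printing Implicit Defensive.
Import GRing.Theory.
Local Open Scope ring_scope.

(* Both parts rest on one object: a multiplicative section GL_3(F_2) -> GL_3(O) of
   the reduction map, where O = Z[beta] with beta^2 + beta + 2 = 0 and beta = 0 mod 2.
   This is Klein's integral 3-dimensional representation of GL_3(F_2) = PSL_2(F_7),
   generated by two explicit matrices; that its 168 elements lie above distinct
   elements exhausting GL_3(F_2), and that the choice of lifts respects products, is
   verified by computation on finite encodings of matrices.  It then
   builds the Klein section over every S containing a root of x^2 + x + 2 with residue 0
   (klein_lift_is_lift), and finally finds such roots:
   - (i) in Z_2, by Hensel's lemma (beta2);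
   - (ii) in Z/4, namely 2; Z/4 is an object of C^ and the resulting lift is trivial on
     the transvection 1 + 2 E_10.  A universal inclusion would give a morphism
     f : R -> Z/4 killing that transvection, i.e. f 2 = 0, while f 2 = 2 in Z/4. *)

Section RingHom.
Variables (R S : nzRingType) (f : R -> S).
Hypothesis hf : is_ring_hom f.

Lemma ring_hom0 : f 0 = 0.
Proof. by case: hf => _ hD _; apply: (@addrI _ (f 0)); rewrite -hD !addr0. Qed.

Definition ring_hom_rmorphism : {rmorphism R -> S} :=
  HB.pack f (GRing.isNmodMorphism.Build _ _ f (ring_hom0, let: And3 _ hD _ := hf in hD))
            (GRing.isMonoidMorphism.Build _ _ f (let: And3 h1 _ hM := hf in (h1, hM))).

Lemma ring_homB x y : f (x - y) = f x - f y.
Proof. exact: (rmorphB ring_hom_rmorphism). Qed.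

Lemma ring_hom_int (a : int) : f a%:~R = a%:~R.
Proof. exact: (rmorph_int ring_hom_rmorphism). Qed.

Lemma ring_hom_map_mxM m n p (A : 'M[R]_(m, n)) (B : 'M[R]_(n, p)) :
  map_mx f (A *m B) = map_mx f A *m map_mx f B.
Proof. exact: (map_mxM ring_hom_rmorphism). Qed.

Lemma ring_hom_map_mx1 n : map_mx f (1%:M : 'M[R]_n) = 1%:M.
Proof. exact: (map_mx1 ring_hom_rmorphism). Qed.
End RingHom.

Lemma mpow_zero (R : nzRingType) (I : R -> Prop) i : mpow I i 0.
Proof. by case: i => [|i]; [exact: mpow0 | exact: mpowZ]. Qed.

Lemma mpow_res (R : nzRingType) (pi : R -> 'F_2) i x :
  is_ring_hom pi -> mpow (mker pi) i x -> (0 < i)%N -> pi x = 0.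
Proof.
move=> hpi; elim=> //= [k _|k a b y ma _ _ _ IHy _]; first exact: (ring_hom0 hpi).
by have [_ hD hM] := hpi; rewrite hD hM ma mul0r add0r IHy.
Qed.

(* A multiplicative section phi of GL_n(S) -> GL_n(F_2) composed with the reduction of
   SL_n(R) is a lift of that reduction; it is continuous because it is already trivial
   on the first congruence subgroup. *)
Section LiftOfSection.
Variables (R S : comNzRingType) (piR : R -> 'F_2) (piS : S -> 'F_2) (n : nat).
Hypothesis hR : is_ring_hom piR.
Variable phi : 'M['F_2]_n -> 'M[S]_n.
Hypothesis phiM : {in unitmx &, {morph phi : A B / A *m B}}.
Hypothesis phi1 : phi 1%:M = 1%:M.
Hypothesis phiK : {in unitmx, forall A, map_mx piS (phi A) = A}.

Lemma congr1_res1 (g : 'M[R]_n) : mx_cong piR 1 g 1%:M -> map_mx piR g = 1%:M.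
Proof.
move=> g1; apply/matrixP => r c; apply/eqP; rewrite mxE -subr_eq0 -(ring_hom_map_mx1 hR) mxE.
by rewrite -(ring_homB hR) (mpow_res hR (g1 r c)).
Qed.

Lemma lift_of_section : is_lift piR piS (map_mx piR) (fun g => phi (map_mx piR g)).
Proof.
(* the adjugate is the inverse in SL_n(R) *)
have res_adj (g : 'M[R]_n) : \det g = 1 ->
    map_mx piR g *m map_mx piR (\adj g) = 1%:M /\ map_mx piR (\adj g) *m map_mx piR g = 1%:M.
  by move=> dg; rewrite -!(ring_hom_map_mxM hR) mul_mx_adj mul_adj_mx dg ring_hom_map_mx1.
have res_unit (g : 'M[R]_n) : \det g = 1 -> map_mx piR g \in unitmx.
  by move=> /res_adj [/mulmx1_unit []].
split=> [g h dg dh | g dg | g dg | j].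
- by rewrite (ring_hom_map_mxM hR) phiM ?res_unit.
- have [gg' g'g] := res_adj g dg; have [ug ug'] := mulmx1_unit gg'.
  by exists (phi (map_mx piR (\adj g))); split; rewrite -phiM // ?gg' ?g'g.
- exact: phiK (res_unit g dg).
- exists 1%N => g _ /congr1_res1 ->; rewrite phi1 => r c; rewrite subrr; exact: mpow_zero.
Qed.
End LiftOfSection.

(* Universality of the inclusion would force every lift rho to an object S to be, up to
   strict equivalence, the image of SL_n(R) under a morphism f : R -> S; so whatever
   rho kills, f kills too. *)
Lemma universal_inclusion_kernel (R S : comNzRingType) (piR : R -> 'F_2) (piS : S -> 'F_2)
    n (rho : 'M[R]_n -> 'M[S]_n) :
  universal_lift piR piR (map_mx piR) (fun g : 'M[R]_n => g) -> in_Chat piS ->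
  is_lift piR piS (map_mx piR) rho ->
  exists2 f : R -> S, Chat_hom piR piS f &
    forall g, \det g = 1 -> rho g = 1%:M -> map_mx f g = 1%:M.
Proof.
case=> _ _ univ hS lift_rho.
have [f [hf [P [Q [PQ QP _ conj]]] _]] := univ S piS hS rho lift_rho.
exists f => // g dg rho_g1; move: (conj g dg); rewrite rho_g1.
move/(congr1 (fun M => Q *m M *m P)); rewrite mulmx1 QP !mulmxA QP mul1mx -mulmxA QP.
by rewrite mulmx1 => <-.
Qed.

Definition transvection (R : nzRingType) n (i j : 'I_n) (a : R) : 'M[R]_n :=
  1%:M + a *: delta_mx i j.

Lemma det_transvection (R : comNzRingType) n (i j : 'I_n) (a : R) :
  (j < i)%N -> \det (transvection i j a) = 1.
Proof.
move=> lt_ji; have tE k l : transvection i j a k l = (k == l)%:R + a * ((k == i) && (l == j))%:R.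
  by rewrite !mxE.
rewrite det_trig; last first.
  apply/is_trig_mxP => k l lt_kl; rewrite tE -val_eqE /= (ltn_eqF lt_kl) add0r.
  case: (eqVneq k i) => [ki|]; case: (eqVneq l j) => [lj|] //=; rewrite ?mulr0 //.
  by move: lt_kl; rewrite ki lj => /(ltn_trans lt_ji); rewrite ltnn.
rewrite big1 // => k _; rewrite tE eqxx.
have ne_ij : (i == j) = false by rewrite -val_eqE /= gtn_eqF.
by case: (eqVneq k i) => [->|] /=; rewrite ?ne_ij mulr0 addr0.
Qed.

Lemma transvection_entry (R : nzRingType) n (i j : 'I_n) (a : R) :
  i != j -> transvection i j a i j = a.
Proof. by move=> /negbTE ne_ij; rewrite !mxE ne_ij !eqxx add0r mulr1. Qed.

Lemma transvection_res (R S : nzRingType) (f : R -> S) n (i j : 'I_n) (a : R) :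
  is_ring_hom f -> f a = 0 -> map_mx f (transvection i j a) = 1%:M.
Proof.
move=> hf fa0; apply/matrixP => k l; have [f1 hD hM] := hf.
by rewrite !mxE hD hM fa0 mul0r addr0; case: (k == l); rewrite ?(ring_hom0 hf).
Qed.

Lemma F2_cases (x : 'F_2) : x = 0 \/ x = 1.
Proof. by case: x => [[|[|n]]] H; [left; apply: val_inj | right; apply: val_inj | ]. Qed.

Definition b2f (b : bool) : 'F_2 := if b then 1 else 0.
Definition f2b (x : 'F_2) : bool := x == 1.

Lemma f2bK : cancel f2b b2f.
Proof. by move=> x; case: (F2_cases x) => ->. Qed.

Lemma b2fK : cancel b2f f2b.
Proof. by case. Qed.

Lemma b2f_and a b : b2f (a && b) = b2f a * b2f b.
Proof. by case: a; case: b; rewrite /= ?mul1r ?mul0r. Qed.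

Lemma b2f_xor a b : b2f (xorb a b) = b2f a + b2f b.
Proof. by case: a; case: b; apply: val_inj. Qed.

Lemma F2_int (a : int) : (a%:~R : 'F_2) = b2f (odd `|a|%N).
Proof.
have F2_nat k : (k%:R : 'F_2) = b2f (odd k).
  by elim: k => // k IH; rewrite mulrS IH /=; case: (odd k); apply: val_inj.
case: a => k; first by rewrite -pmulrn F2_nat.
by rewrite NegzE mulrNz -pmulrn F2_nat /=; case: (~~ odd k); apply: val_inj.
Qed.

Lemma F2_modz (a : int) : ((a %% 2)%Z%:~R : 'F_2) = a%:~R.
Proof. by rewrite [in RHS](divz_eq a 2) [in RHS]intrD intrM [2%:~R]F2_int mulr0 add0r. Qed.

Definition mk3 (T : Type) (F : nat -> nat -> T) : seq (seq T) :=
  [:: [:: F 0 0; F 0 1; F 0 2]; [:: F 1 0; F 1 1; F 1 2]; [:: F 2 0; F 2 1; F 2 2]]%N.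

Definition entry3 (T : Type) (d : T) (s : seq (seq T)) (i j : nat) : T :=
  nth d (nth [::] s i) j.

Lemma entry3_mk3 (T : Type) (d : T) (F : nat -> nat -> T) (i j : 'I_3) :
  entry3 d (mk3 F) i j = F i j.
Proof. by case: i => [[|[|[|?]]] ?] //; case: j => [[|[|[|?]]] ?]. Qed.

Definition code := seq (seq bool).

Definition cmul (c d : code) : code := mk3 (fun i j =>
  xorb (xorb (entry3 false c i 0 && entry3 false d 0 j)
             (entry3 false c i 1 && entry3 false d 1 j))
       (entry3 false c i 2 && entry3 false d 2 j)).

Definition code1 : code := mk3 (fun i j => i == j).

Definition enc (A : 'M['F_2]_3) : code := mk3 (fun i j => f2b (A (inord i) (inord j))).
Definition dec (c : code) : 'M['F_2]_3 := \matrix_(i, j) b2f (entry3 false c i j).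

Lemma dec_enc : cancel enc dec.
Proof. by move=> A; apply/matrixP => i j; rewrite mxE entry3_mk3 !inord_val f2bK. Qed.

Lemma enc_dec (F : nat -> nat -> bool) : enc (dec (mk3 F)) = mk3 F.
Proof. by rewrite /enc /dec /mk3 !mxE !inordK // !b2fK. Qed.

Lemma dec_mul (c d : code) : dec (cmul c d) = dec c *m dec d.
Proof.
apply/matrixP => i j; rewrite !mxE entry3_mk3 !big_ord_recr big_ord0 /= add0r !mxE.
by rewrite !b2f_xor !b2f_and.
Qed.

Lemma enc_mul (A B : 'M['F_2]_3) : enc (A *m B) = cmul (enc A) (enc B).
Proof. by rewrite -{1}(dec_enc A) -{1}(dec_enc B) -dec_mul enc_dec. Qed.

Lemma enc1 : enc 1%:M = code1.
Proof.
have -> : 1%:M = dec code1.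
  by apply/matrixP => i j; rewrite !mxE entry3_mk3 val_eqE; case: (i == j).
exact: enc_dec.
Qed.

Fixpoint tuples_of (T : Type) (xs : seq T) (n : nat) : seq (seq T) :=
  if n is k.+1 then [seq x :: s | x <- xs, s <- tuples_of xs k] else [:: [::]].

Lemma mem_tuples_of (T : eqType) (xs s : seq T) :
  all (mem xs) s -> s \in tuples_of xs (size s).
Proof.
elim: s => //= x s IH /andP [xs_x /IH s_in].
exact: (allpairs_f_dep (fun x s => x :: s)).
Qed.

Definition all_codes : seq code := tuples_of (tuples_of [:: true; false] 3) 3.

Lemma enc_all_codes (A : 'M['F_2]_3) : enc A \in all_codes.
Proof.
apply: (mem_tuples_of (s := enc A)); apply/and4P; split=> //.
all: by apply: (mem_tuples_of (s := [:: _; _; _])); apply/and4P; split=> //; case: f2b.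
Qed.

(* The ring O = Z[beta]/(beta^2 + beta + 2); the pair (a, b) encodes a + b beta.
   It maps to any ring S containing a root beta of x^2 + x + 2. *)
Definition zbeta := (int * int)%type.
Definition zbeta_add (x y : zbeta) : zbeta := (x.1 + y.1, x.2 + y.2).
Definition zbeta_mul (x y : zbeta) : zbeta :=
  (x.1 * y.1 - 2 * (x.2 * y.2), x.1 * y.2 + x.2 * y.1 - x.2 * y.2).

Definition zbeta_eval (S : nzRingType) (beta : S) (x : zbeta) : S :=
  x.1%:~R + x.2%:~R * beta.

Section ZBetaEval.
Variables (S : comNzRingType) (beta : S).
Hypothesis beta_root : beta * beta + beta + 2 = 0.

Lemma zbeta_evalD x y :
  zbeta_eval beta (zbeta_add x y) = zbeta_eval beta x + zbeta_eval beta y.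
Proof. by case: x y => [a b] [c d]; rewrite /zbeta_eval /= !intrD; ring. Qed.

Lemma zbeta_evalM x y :
  zbeta_eval beta (zbeta_mul x y) = zbeta_eval beta x * zbeta_eval beta y.
Proof.
case: x y => [a b] [c d]; rewrite /zbeta_eval /=.
transitivity ((a%:~R + b%:~R * beta) * (c%:~R + d%:~R * beta)
               - (b * d)%:~R * (beta * beta + beta + 2)); last first.
  by rewrite beta_root mulr0 subr0.
by rewrite !intrD !intrN !intrM; ring.
Qed.
End ZBetaEval.

Definition zmx := seq (seq zbeta).
Definition zentry (X : zmx) (i j : nat) : zbeta := entry3 (0, 0) X i j.

Definition zmx_mul (X Y : zmx) : zmx := mk3 (fun i j =>
  zbeta_add (zbeta_add (zbeta_mul (zentry X i 0) (zentry Y 0 j))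
                       (zbeta_mul (zentry X i 1) (zentry Y 1 j)))
            (zbeta_mul (zentry X i 2) (zentry Y 2 j))).

Definition zmx1 : zmx := mk3 (fun i j => if i == j then (1, 0) else (0, 0)).

Definition zmx_eval (S : nzRingType) (beta : S) (X : zmx) : 'M[S]_3 :=
  \matrix_(i, j) zbeta_eval beta (zentry X i j).

Lemma zmx_evalM (S : comNzRingType) (beta : S) X Y : beta * beta + beta + 2 = 0 ->
  zmx_eval beta (zmx_mul X Y) = zmx_eval beta X *m zmx_eval beta Y.
Proof.
move=> beta_root; apply/matrixP => i j.
rewrite !mxE /zentry entry3_mk3 !big_ord_recr big_ord0 /= add0r !mxE.
by rewrite !zbeta_evalD !(zbeta_evalM beta_root).
Qed.

Lemma zmx_eval1 (S : nzRingType) (beta : S) : zmx_eval beta zmx1 = 1%:M.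
Proof.
apply/matrixP => i j; rewrite !mxE /zentry entry3_mk3 val_eqE /zbeta_eval.
by case: (i == j) => /=; rewrite ?mul0r ?addr0.
Qed.

Lemma map_zmx_eval (S T : nzRingType) (f : S -> T) (beta : S) X :
  is_ring_hom f -> map_mx f (zmx_eval beta X) = zmx_eval (f beta) X.
Proof.
move=> hf; apply/matrixP => i j; rewrite !mxE /zbeta_eval.
by have [_ hD hM] := hf; rewrite hD hM !(ring_hom_int hf).
Qed.

(* reduction mod beta (the prime above 2), computed on codes *)
Definition zmx_code (X : zmx) : code := mk3 (fun i j => odd `|(zentry X i j).1|%N).

Lemma enc_zmx_eval0 X : enc (zmx_eval (0 : 'F_2) X) = zmx_code X.
Proof.
rewrite /zmx_code -enc_dec; congr enc; apply/matrixP => i j.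
by rewrite !mxE entry3_mk3 /zbeta_eval mulr0 addr0 F2_int.
Qed.

(* reduction mod beta is multiplicative, since beta = 0 is a root of x^2 + x + 2 in F_2 *)
Lemma zmx_code_mul X Y : zmx_code (zmx_mul X Y) = cmul (zmx_code X) (zmx_code Y).
Proof. by rewrite -!enc_zmx_eval0 zmx_evalM ?enc_mul //; apply: val_inj. Qed.

(* Klein's group: generated by klein_a (order 2) and klein_b (order 7), whose product has
   order 3; it has 168 elements, one above each element of GL_3(F_2). *)
Definition klein_a : zmx :=
  [:: [:: (0, 0); (0, 0); (1, 0)];
      [:: (-1, 0); (-1, 0); (-1, 0)];
      [:: (1, 0); (0, 0); (0, 0)]].
Definition klein_b : zmx :=
  [:: [:: (-1, -1); (1, 0); (0, 0)];
      [:: (0, -1); (0, 0); (1, 0)];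
      [:: (1, 0); (0, 0); (0, 0)]].

Fixpoint grow (fuel : nat) (gens seen frontier : seq zmx) : seq zmx :=
  if fuel is k.+1 then
    let new := undup [seq Y <- [seq zmx_mul X g | X <- frontier, g <- gens] | Y \notin seen] in
    if new is [::] then seen else grow k gens (seen ++ new) new
  else seen.

Definition klein_group : seq zmx := grow 168 [:: klein_a; klein_b] [:: zmx1] [:: zmx1].
Definition klein_codes : seq code := map zmx_code klein_group.

Definition klein_lookup (c : code) : zmx := nth zmx1 klein_group (index c klein_codes).

Lemma klein_lookup_mul : all (fun X => all (fun Y =>
    let Z := zmx_mul X Y in klein_lookup (zmx_code Z) == Z) klein_group) klein_group.
Proof. by vm_compute. Qed.

Lemma klein_lookup1 : klein_lookup code1 = zmx1.
Proof. by vm_compute. Qed.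

Lemma klein_codes_cover : all (fun c =>
    (c \in klein_codes) || ~~ has (fun d => cmul c d == code1) all_codes) all_codes.
Proof. by vm_compute. Qed.

(* From now on the group is used only through the facts verified above; keeping it
   opaque prevents unification from evaluating it. *)
Opaque klein_group.

Lemma klein_lookupP c :
  c \in klein_codes -> klein_lookup c \in klein_group /\ zmx_code (klein_lookup c) = c.
Proof.
move=> c_in; have lt_c : (index c klein_codes < size klein_group)%N.
  by rewrite -[size klein_group](size_map zmx_code) -/klein_codes index_mem.
split; first exact: (mem_nth zmx1 lt_c).
by rewrite -(nth_map _ (zmx_code zmx1) _ lt_c) -/klein_codes (nth_index _ c_in).
Qed.

Lemma klein_codes_unit (A : 'M['F_2]_3) : A \in unitmx -> enc A \in klein_codes.
Proof.
move=> uA; case/orP: (allP klein_codes_cover _ (enc_all_codes A)) => [A_in | /hasPn no_inv].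
  exact: A_in.
by have := no_inv _ (enc_all_codes (invmx A)); rewrite -enc_mul (mulmxV uA) enc1 eqxx.
Qed.

Definition klein_section (S : nzRingType) (beta : S) (A : 'M['F_2]_3) : 'M[S]_3 :=
  zmx_eval beta (klein_lookup (enc A)).

Lemma klein_sectionM (S : comNzRingType) (beta : S) : beta * beta + beta + 2 = 0 ->
  {in unitmx &, {morph klein_section beta : A B / A *m B}}.
Proof.
move=> beta_root A B /klein_codes_unit /klein_lookupP [XG XA].
move=> /klein_codes_unit /klein_lookupP [YG YB].
rewrite /klein_section; set X := klein_lookup (enc A) in XG XA *.
set Y := klein_lookup (enc B) in YG YB *.
rewrite enc_mul -XA -YB -zmx_code_mul.
by have /allP /(_ _ YG) /eqP -> := allP klein_lookup_mul _ XG; exact: zmx_evalM.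
Qed.

Lemma klein_section1 (S : nzRingType) (beta : S) : klein_section beta 1%:M = 1%:M.
Proof. by rewrite /klein_section enc1 klein_lookup1 zmx_eval1. Qed.

Lemma klein_sectionK (S : nzRingType) (piS : S -> 'F_2) (beta : S) :
  is_ring_hom piS -> piS beta = 0 ->
  {in unitmx, forall A, map_mx piS (klein_section beta A) = A}.
Proof.
move=> hS beta0 A /klein_codes_unit /klein_lookupP [_ XA].
rewrite /klein_section; set X := klein_lookup (enc A) in XA *.
by rewrite (map_zmx_eval _ _ hS) beta0 -[RHS]dec_enc -XA -enc_zmx_eval0 dec_enc.
Qed.

Definition klein_lift (R S : nzRingType) (piR : R -> 'F_2) (beta : S) (g : 'M[R]_3) : 'M[S]_3 :=
  klein_section beta (map_mx piR g).

Lemma klein_lift_is_lift (R S : comNzRingType) (piR : R -> 'F_2) (piS : S -> 'F_2) (beta : S) :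
  is_ring_hom piR -> is_ring_hom piS -> beta * beta + beta + 2 = 0 -> piS beta = 0 ->
  is_lift piR piS (map_mx piR) (klein_lift piR beta).
Proof.
move=> hR hS beta_root beta0.
exact: lift_of_section (klein_sectionM beta_root) (klein_section1 beta) (klein_sectionK hS beta0).
Qed.

Lemma z2res_hom : is_ring_hom z2res.
Proof.
by rewrite /z2res; split=> [|x y|x y] /=; rewrite ?[pw 1]/= ?F2_modz ?intrD ?intrM.
Qed.

(* Hensel's lemma for x^2 + x + 2 in Z_2 (its derivative 2x + 1 is a unit). *)
Definition hensel_poly (a : int) : int := a * a + a + 2.

Lemma hensel_poly_mod (a p : int) : (hensel_poly (a %% p)%Z = hensel_poly a %[mod p])%Z.
Proof.
apply/eqP; rewrite eqz_mod_dvd.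
have -> : hensel_poly (a %% p)%Z - hensel_poly a = ((a %% p)%Z - a) * ((a %% p)%Z + a + 1).
  by rewrite /hensel_poly; ring.
apply: dvdz_mulr; rewrite {2}(divz_eq a p).
have -> : (a %% p)%Z - ((a %/ p)%Z * p + (a %% p)%Z) = - (a %/ p)%Z * p by ring.
exact/dvdz_mull/dvdzz.
Qed.

Lemma z2seq_hensel (x : Z2) n :
  z2seq (x * x + x + 2) n = modz (hensel_poly (z2seq x n)) (pw n).
Proof.
set a := z2seq x n; have -> : hensel_poly a = (a * a + a) + (1 + 1) by [].
by rewrite /= -[RHS]modzDm -[((a * a + a) %% _)%Z]modzDml -[((1 + 1) %% _)%Z]modzDm.
Qed.

Lemma hensel_step (a d : int) : (2 %| d)%Z -> (d %| hensel_poly a)%Z ->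
  ~~ (d * 2 %| hensel_poly a)%Z -> (d * 2 %| hensel_poly (a + d))%Z.
Proof.
move=> /dvdzP [e ->] /dvdzP [k Hk] not2.
have e0 : e * 2 != 0.
  by apply: contra not2 => /eqP e0; rewrite Hk e0 !(mul0r, mulr0) dvdz0.
have -> : hensel_poly (a + e * 2) = e * 2 * (k + 2 * a + 1 + e * 2).
  transitivity (hensel_poly a + e * 2 * (2 * a + 1 + e * 2)); first by rewrite /hensel_poly; ring.
  by rewrite Hk; ring.
rewrite dvdz_mul2l //; move: not2; rewrite Hk mulrC dvdz_mul2l //.
lia.
Qed.

Fixpoint hensel_seq (n : nat) : int :=
  if n is k.+1 then
    let a := hensel_seq k in if (pw k.+1 %| hensel_poly a)%Z then a else a + pw k
  else 0.

Lemma hensel_seq_root n : (pw n %| hensel_poly (hensel_seq n))%Z.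
Proof.
elim: n => [|n IH]; first exact: dvd1z.
rewrite /=; case: ifP => // /negbT not_root.
case: n IH not_root => [|n] IH; first by [].
by rewrite pwS; apply: hensel_step; rewrite // pwS dvdz_mull.
Qed.

Lemma hensel_seq_coh n : (hensel_seq n.+1 = hensel_seq n %[mod pw n])%Z.
Proof. by rewrite /=; case: ifP => // _; rewrite modzDr. Qed.

Lemma beta2_coh n :
  modz (hensel_seq n) (pw n) = modz (modz (hensel_seq n.+1) (pw n.+1)) (pw n).
Proof. by rewrite modpwS hensel_seq_coh. Qed.

Definition beta2 : Z2 := MkZ2 beta2_coh.

Lemma beta2_root : beta2 * beta2 + beta2 + 2 = 0.
Proof.
apply: z2_ext => n; rewrite z2seq_hensel /= hensel_poly_mod.
exact/dvdz_mod0P/hensel_seq_root.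
Qed.

Lemma z2res_beta2 : z2res beta2 = 0.
Proof. by []. Qed.

(* every finite ring is noetherian: an ideal is generated by its own elements *)
Lemma finite_noetherian (R : finNzRingType) : noetherian R.
Proof.
move=> I _.
pose inI x : bool := if excluded_middle_informative (I x) then true else false.
have inIP x : reflect (I x) (inI x).
  by rewrite /inI; case: excluded_middle_informative => ?; constructor.
pose s := [seq x <- enum R | inI x]; exists s; split=> [i lt_i_s | x Ix].
  by have := mem_nth 0 lt_i_s; rewrite mem_filter => /andP [/inIP].
have x_s : x \in s by rewrite mem_filter mem_enum andbT; apply/inIP.
have lt_x_s : (index x s < size s)%N by rewrite index_mem.
exists (fun i => (i == Ordinal lt_x_s)%:R).
rewrite (bigD1 (Ordinal lt_x_s)) //= eqxx mul1r nth_index // big1 ?addr0 //.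
by move=> i /negPf ->; rewrite mul0r.
Qed.

(* if the maximal ideal squares to zero, the m-adic topology is discrete *)
Section SquareZeroMaximalIdeal.
Variables (R : nzRingType) (pi : R -> 'F_2).
Hypothesis hpi : is_ring_hom pi.
Hypothesis m_sq0 : forall a b, pi a = 0 -> pi b = 0 -> a * b = 0.

Lemma mpow_sq0 i x : mpow (mker pi) i x -> (1 < i)%N -> x = 0.
Proof.
elim=> // k a b y ma mb _ _ IHy lt1k.
by rewrite IHy // addr0 m_sq0 // (mpow_res hpi mb).
Qed.

Lemma sq0_complete : m_complete pi.
Proof.
split=> [x /(_ 2%N) /mpow_sq0 -> // | x Cx]; exists (x 2%N) => i.
have const k : x (k + 2)%N = x 2%N.
  elim: k => // k IH; rewrite addSn -IH; apply/eqP.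
  by rewrite -subr_eq0 (mpow_sq0 (Cx _)) // addn2.
case: i => [|[|k]]; [exact: mpow0 | exact: Cx 1%N | ].
by rewrite -addn2 const subrr; exact: mpow_zero.
Qed.
End SquareZeroMaximalIdeal.

Definition res4 (x : 'Z_4) : 'F_2 := (val x)%:R.

Lemma res4_hom : is_ring_hom res4.
Proof.
split=> [|x y|x y]; first exact: val_inj.
all: by case: x => [[|[|[|[|//]]]] ?]; case: y => [[|[|[|[|//]]]] ?]; apply: val_inj.
Qed.

Lemma res4_sq0 (a b : 'Z_4) : res4 a = 0 -> res4 b = 0 -> a * b = 0.
Proof.
case: a => [[|[|[|[|//]]]] ?]; case: b => [[|[|[|[|//]]]] ?] => /(congr1 val) ha /(congr1 val) hb.
all: by apply: val_inj; move: ha hb.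
Qed.

(* the odd residues 1 and 3 are their own inverses *)
Lemma res4_local : local_res res4.
Proof.
split=> [|x]; first exact: res4_hom.
case: x => [[|[|[|[|//]]]] ?] /eqP ne0; try by case: ne0; apply: val_inj.
- by exists 1; split; apply: val_inj.
- by exists 3; split; apply: val_inj.
Qed.

Lemma Z4_in_Chat : in_Chat res4.
Proof.
split; [exact: res4_local | exact: finite_noetherian | ].
exact: (sq0_complete res4_hom res4_sq0).
Qed.

Lemma beta4_root : (2 : 'Z_4) * 2 + 2 + 2 = 0.
Proof. exact: val_inj. Qed.

Lemma res4_beta4 : res4 2 = 0.
Proof. exact: val_inj. Qed.

Theorem mainTheorem6 (R : comNzRingType) (piR : R -> 'F_2) (hR : in_Chat piR) :
  (exists rho0 : 'M[R]_3 -> 'M[Z2]_3, is_lift piR z2res (map_mx piR) rho0) /\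
  ~ universal_lift piR piR (map_mx piR) (fun g : 'M[R]_3 => g).
Proof.
have hRh : is_ring_hom piR by case: hR => [[]].
split.
  exists (klein_lift piR beta2).
  exact: klein_lift_is_lift hRh z2res_hom beta2_root z2res_beta2.
move=> univ; pose two : R := 1 + 1.
have two0 : piR two = 0 by have [h1 hD _] := hRh; rewrite hD h1; apply: val_inj.
pose t : 'M[R]_3 := transvection 1 0 two.
have [f [hf _] kills] := universal_inclusion_kernel univ Z4_in_Chat
  (klein_lift_is_lift hRh res4_hom beta4_root res4_beta4).
have ft1 : map_mx f t = 1%:M.
  apply: kills; first exact: det_transvection.
  by rewrite /klein_lift transvection_res // klein_section1.
(* reading off the (1, 0) entry: f 2 = 0, i.e. 2 = 0 in Z/4 *)
move/(congr1 (fun M : 'M_3 => M 1 0)): ft1.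
rewrite [LHS]mxE transvection_entry // mxE; have [f1 fD _] := hf; rewrite fD f1.
by move/(congr1 val).
Qed.
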